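(* $\displaystyle \frac{S_n}{n\log n}\to 1$ in distribution (equivalently, in probability) with respect to $\lambda$, as $n\to\infty$.
   Context: Let $\lambda$ be Lebesgue measure on $[0,1)$, $\tau(x)=2x\bmod 1$ the doubling map, $\chi(x)=\lfloor 1/x\rfloor$ (with $\chi(0)=\infty$), $a_n=\chi\circ\tau^{n-1}$ and $S_n=\sum_{k=1}^n a_k$. *)

From Stdlib Require Import Reals Lra Lia ZArith.
Open Scope R_scope.

Definition tau (x : R) : R := 2 * x - IZR (Int_part (2 * x)).

Fixpoint tau_iter (k : nat) (x : R) : R :=
  match k with O => x | S k' => tau (tau_iter k' x) end.

(* chi(x) = floor(1/x), with chi(0) = infinity encoded as None *)
Definition chi (x : R) : option nat :=
  if Req_EM_T x 0 then None else Some (Z.to_nat (Int_part (/ x))).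

Definition a (n : nat) (x : R) : option nat := chi (tau_iter (n - 1) x).

Fixpoint Ssum (n : nat) (x : R) : option nat :=
  match n with
  | O => Some O
  | S m => match Ssum m x, a (S m) x with
           | Some s, Some t => Some (s + t)%nat
           | _, _ => None
           end
  end.

(* Lebesgue outer measure bound: lambda*(A) <= d, i.e. A is covered by
   countably many open intervals of total length at most d. *)
Definition outer_measure_le (A : R -> Prop) (d : R) : Prop :=
  exists lo hi : nat -> R,
    (forall i, lo i <= hi i) /\
    (forall x, A x -> exists i, lo i < x < hi i) /\
    (forall N, sum_f_R0 (fun i => hi i - lo i) N <= d).

Definition deviation_event (eps : R) (n : nat) (x : R) : Prop :=
  0 <= x < 1 /\
  match Ssum n x with
  | None => True
  | Some s => Rabs (INR s / (INR n * ln (INR n)) - 1) > eps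
  end.

(* Write x in binary and fix p with 2^p <= n < 2^(p+1) and W = 2p + 2.  Then a_(j+1)(x)
   lies between 2^W / (w_j + 1) - 1 and 2^W / w_j, where w_j is the integer formed by the
   W binary digits of x following position j, so S_n is controlled by the first
   n - 1 + W digits.
   Under Lebesgue measure each w_j is uniform on [0, 2^W) and windows at distance at
   least W are independent.  Split 2^W / w at the level 2^W / m, m = 2^(p+2+r):
   - the truncated part has mean (p - r) ln 2 + O(1), i.e. about ln n, per window, and
     by the finite-range dependence its sum has variance O(n W 2^(p-r) ln n), that is
     O(2^-r (n ln n)^2), so Chebyshev's inequality concentrates it at n ln n;
   - windows in [A, m), A = 2^(p+2-q), contribute O(n (r + q)) on average, which is
     o(n ln n), so Markov's inequality makes them negligible;
   - windows below A, including w = 0 where a_j may be infinite, occur with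
     probability O(n A / 2^W) = O(2^-q).
   The resulting bound on the mean of a function of the digits dominating the
   indicator of the deviation event yields a cover by dyadic intervals. *)

From Stdlib Require Import Reals Lra Lia Arith ZArith Classical.
Open Scope R_scope.

Fixpoint sumR (N : nat) (f : nat -> R) : R :=
  match N with O => 0 | S m => sumR m f + f m end.

Lemma sumR_ext N f g : (forall i, (i < N)%nat -> f i = g i) -> sumR N f = sumR N g.
Proof.
  induction N as [|N IH]; intros H; simpl; auto.
  rewrite IH by (intros; apply H; lia). rewrite H by lia. reflexivity.
Qed.

Lemma sumR_le N f g : (forall i, (i < N)%nat -> f i <= g i) -> sumR N f <= sumR N g.
Proof.
  induction N as [|N IH]; intros H; simpl; [lra|].
  assert (sumR N f <= sumR N g) by (apply IH; intros; apply H; lia).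
  specialize (H N ltac:(lia)); lra.
Qed.

Lemma sumR_plus N f g : sumR N (fun i => f i + g i) = sumR N f + sumR N g.
Proof. induction N; simpl; lra. Qed.

Lemma sumR_minus N f g : sumR N (fun i => f i - g i) = sumR N f - sumR N g.
Proof. induction N; simpl; lra. Qed.

Lemma sumR_scal_l N c f : sumR N (fun i => c * f i) = c * sumR N f.
Proof. induction N as [|N IH]; simpl; [lra|]. rewrite IH; lra. Qed.

Lemma sumR_scal_r N c f : sumR N (fun i => f i * c) = sumR N f * c.
Proof. induction N as [|N IH]; simpl; [lra|]. rewrite IH; lra. Qed.

Lemma sumR_const N c : sumR N (fun _ => c) = INR N * c.
Proof. induction N as [|N IH]; simpl sumR; [simpl; lra|]. rewrite IH, S_INR; lra. Qed.

Lemma sumR_nonneg N f : (forall i, (i < N)%nat -> 0 <= f i) -> 0 <= sumR N f.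
Proof.
  intros H. apply Rle_trans with (sumR N (fun _ => 0)).
  - rewrite sumR_const; lra.
  - apply sumR_le; auto.
Qed.

Lemma sumR_add a b f : sumR (a + b) f = sumR a f + sumR b (fun i => f (a + i)%nat).
Proof.
  induction b as [|b IH]; simpl; [rewrite Nat.add_0_r; lra|].
  rewrite Nat.add_succ_r; simpl. rewrite IH; lra.
Qed.

Lemma sumR_split N a f : (a <= N)%nat ->
  sumR N f = sumR a f + sumR (N - a) (fun i => f (a + i)%nat).
Proof. intros H. rewrite <- sumR_add. f_equal. lia. Qed.

Lemma sumR_mul a b f : sumR (a * b) f = sumR a (fun h => sumR b (fun l => f (h * b + l)%nat)).
Proof. induction a as [|a IH]; simpl; auto. rewrite Nat.add_comm, sumR_add, IH; auto. Qed.

Lemma sumR_swap N K f :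
  sumR N (fun i => sumR K (fun j => f i j)) = sumR K (fun j => sumR N (fun i => f i j)).
Proof.
  induction N as [|N IH]; simpl.
  - rewrite sumR_const; simpl; lra.
  - rewrite IH, <- sumR_plus; auto.
Qed.

Lemma sumR_prod N K f g : sumR N f * sumR K g = sumR N (fun i => sumR K (fun j => f i * g j)).
Proof.
  rewrite <- sumR_scal_r. apply sumR_ext; intros i _. rewrite <- sumR_scal_l. auto.
Qed.

Lemma sum_f_R0_sumR g N : sum_f_R0 g N = sumR (S N) g.
Proof. induction N as [|N IH]; simpl in *; [lra|]. rewrite IH; auto. Qed.

Lemma sumR_term_le N f j : (forall i, (i < N)%nat -> 0 <= f i) -> (j < N)%nat -> f j <= sumR N f.
Proof.
  intros H Hj. rewrite (sumR_split N (S j)) by lia. cbn [sumR].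
  assert (0 <= sumR j f) by (apply sumR_nonneg; intros; apply H; lia).
  assert (0 <= sumR (N - S j) (fun i => f (S j + i)%nat)) by (apply sumR_nonneg; intros; apply H; lia).
  lra.
Qed.

Lemma sumR_zero_tail K B f : (forall i, (B <= i)%nat -> f i = 0) -> (forall i, 0 <= f i) ->
  sumR K f <= sumR B f.
Proof.
  intros H0 Hpos. destruct (le_lt_dec K B) as [HKB|HBK].
  - rewrite (sumR_split B K) by lia.
    assert (0 <= sumR (B - K) (fun i => f (K + i)%nat)) by (apply sumR_nonneg; auto). lra.
  - rewrite (sumR_split K B) by lia.
    rewrite (sumR_ext (K - B) _ (fun _ => 0)) by (intros; apply H0; lia).
    rewrite sumR_const; lra.
Qed.

Lemma pow2_pos k : (0 < 2 ^ k)%nat.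
Proof. apply Nat.neq_0_lt_0, Nat.pow_nonzero; lia. Qed.

Lemma pow2_pos_R k : 0 < 2 ^ k.
Proof. apply pow_lt; lra. Qed.

Lemma INR_pow2 k : INR (2 ^ k) = 2 ^ k.
Proof. rewrite pow_INR. reflexivity. Qed.

Lemma INR_le_pow2 k : INR k <= 2 ^ k.
Proof.
  induction k as [|k IH]; [simpl; lra|].
  rewrite S_INR. simpl. assert (1 <= 2 ^ k) by (apply pow_R1_Rle; lra). lra.
Qed.

Lemma sumR_div H Q g : (0 < Q)%nat ->
  sumR (H * Q) (fun s => g (s / Q)%nat) = INR Q * sumR H g.
Proof.
  intros HQ. rewrite sumR_mul, <- sumR_scal_l. apply sumR_ext; intros h _.
  rewrite <- (sumR_const Q (g h)). apply sumR_ext; intros l Hl. f_equal.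
  rewrite Nat.div_add_l, Nat.div_small by lia. lia.
Qed.

Lemma sumR_mod K P g : (0 < P)%nat ->
  sumR (K * P) (fun h => g (h mod P)%nat) = INR K * sumR P g.
Proof.
  intros HP. rewrite sumR_mul, <- sumR_const. apply sumR_ext; intros h _.
  apply sumR_ext; intros l Hl. f_equal.
  rewrite Nat.add_comm, Nat.Div0.mod_add. apply Nat.mod_small; auto.
Qed.

(* [avg M f] is the mean of [f (digits M x)] for [x] uniform in [0, 1), since the
   first M binary digits of such an [x] form a uniform integer below 2^M. *)
Definition avg (M : nat) (f : nat -> R) : R := sumR (2 ^ M) f / 2 ^ M.

Definition window (e W s : nat) : nat := ((s / 2 ^ e) mod 2 ^ W)%nat.

Lemma window_lt e W s : (window e W s < 2 ^ W)%nat.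
Proof. apply Nat.mod_upper_bound, Nat.pow_nonzero; lia. Qed.

Lemma avg_ext M f g : (forall s, f s = g s) -> avg M f = avg M g.
Proof. intros H. unfold avg. f_equal. apply sumR_ext; auto. Qed.

Lemma avg_plus M f g : avg M (fun s => f s + g s) = avg M f + avg M g.
Proof. unfold avg. rewrite sumR_plus. field. apply Rgt_not_eq, pow2_pos_R. Qed.

Lemma avg_scal M c f : avg M (fun s => c * f s) = c * avg M f.
Proof. unfold avg. rewrite sumR_scal_l. field. apply Rgt_not_eq, pow2_pos_R. Qed.

Lemma avg_const M c : avg M (fun _ => c) = c.
Proof. unfold avg. rewrite sumR_const, INR_pow2. field. apply Rgt_not_eq, pow2_pos_R. Qed.

Lemma avg_le M f g : (forall s, (s < 2 ^ M)%nat -> f s <= g s) -> avg M f <= avg M g.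
Proof.
  intros H. unfold avg. apply Rmult_le_compat_r.
  - left; apply Rinv_0_lt_compat, pow2_pos_R.
  - apply sumR_le; auto.
Qed.

Lemma avg_nonneg M f : (forall s, 0 <= f s) -> 0 <= avg M f.
Proof. intros H. rewrite <- (avg_const M 0). apply avg_le; auto. Qed.

Lemma avg_sum M n F : avg M (fun s => sumR n (fun j => F j s)) = sumR n (fun j => avg M (F j)).
Proof. unfold avg. rewrite sumR_swap. unfold Rdiv. rewrite <- sumR_scal_r. auto. Qed.

Lemma sumR_window e W M g : (e + W <= M)%nat ->
  sumR (2 ^ M) (fun s => g (window e W s)) = INR (2 ^ (M - W)) * sumR (2 ^ W) g.
Proof.
  intros H. unfold window.
  replace (2 ^ M)%nat with ((2 ^ (M - e - W) * 2 ^ W) * 2 ^ e)%nat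
    by (rewrite <- !Nat.pow_add_r; f_equal; lia).
  rewrite (sumR_div _ _ (fun h => g (h mod 2 ^ W)%nat)) by apply pow2_pos.
  rewrite sumR_mod by apply pow2_pos. rewrite <- Rmult_assoc, <- mult_INR.
  do 2 f_equal. rewrite <- Nat.pow_add_r. f_equal. lia.
Qed.

Lemma avg_window e W M g : (e + W <= M)%nat -> avg M (fun s => g (window e W s)) = avg W g.
Proof.
  intros H. unfold avg. rewrite sumR_window, INR_pow2 by auto.
  replace (2 ^ M) with (2 ^ (M - W) * 2 ^ W) by (rewrite <- pow_add; f_equal; lia).
  field. split; apply Rgt_not_eq, pow2_pos_R.
Qed.

Lemma window_high e W H l : (l < 2 ^ e)%nat -> window e W (H * 2 ^ e + l) = window 0 W H.
Proof.
  intros Hl. unfold window. f_equal.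
  rewrite Nat.div_add_l by (apply Nat.pow_nonzero; lia).
  rewrite Nat.div_small by auto. rewrite Nat.pow_0_r, Nat.div_1_r. lia.
Qed.

Lemma window_low e1 e2 W H l : (e2 + W <= e1)%nat -> window e2 W (H * 2 ^ e1 + l) = window e2 W l.
Proof.
  intros He. unfold window.
  replace (H * 2 ^ e1)%nat with ((H * 2 ^ (e1 - e2 - W)) * 2 ^ W * 2 ^ e2)%nat
    by (rewrite <- !Nat.mul_assoc, <- !Nat.pow_add_r; do 2 f_equal; lia).
  rewrite Nat.div_add_l by (apply Nat.pow_nonzero; lia).
  rewrite Nat.add_comm, Nat.Div0.mod_add; auto.
Qed.

Lemma avg_window_mul e1 e2 W M g1 g2 : (e2 + W <= e1)%nat -> (e1 + W <= M)%nat ->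
  avg M (fun s => g1 (window e1 W s) * g2 (window e2 W s)) = avg W g1 * avg W g2.
Proof.
  intros H1 H2. unfold avg.
  replace (2 ^ M)%nat with (2 ^ (M - e1) * 2 ^ e1)%nat by (rewrite <- Nat.pow_add_r; f_equal; lia).
  rewrite sumR_mul.
  rewrite (sumR_ext _ _ (fun h => g1 (window 0 W h) * sumR (2 ^ e1) (fun l => g2 (window e2 W l)))).
  2:{ intros h _. rewrite <- sumR_scal_l. apply sumR_ext; intros l Hl.
      rewrite window_high, window_low by auto. auto. }
  rewrite sumR_scal_r, (sumR_window 0 W (M - e1)), (sumR_window e2 W e1) by lia.
  rewrite !INR_pow2.
  replace (2 ^ M) with (2 ^ (M - e1 - W) * 2 ^ (e1 - W) * 2 ^ W * 2 ^ W)
    by (rewrite <- !pow_add; f_equal; lia).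
  field. repeat split; apply Rgt_not_eq, pow2_pos_R.
Qed.

Definition window_sum (n W : nat) (phi : nat -> R) (s : nat) : R :=
  sumR n (fun j => phi (window (n - 1 - j) W s)).

Lemma window_sum_nonneg n W phi s : (forall w, 0 <= phi w) -> 0 <= window_sum n W phi s.
Proof. intros H. apply sumR_nonneg; auto. Qed.

Lemma avg_window_sum n W M phi : (n - 1 + W <= M)%nat ->
  avg M (window_sum n W phi) = INR n * avg W phi.
Proof.
  intros H. unfold window_sum. rewrite avg_sum, (sumR_ext _ _ (fun _ => avg W phi)).
  - apply sumR_const.
  - intros j Hj. apply avg_window. lia.
Qed.

Definition ind_interval (a d k : nat) : R := if andb (a <=? k)%nat (k <? a + d)%nat then 1 else 0.

Lemma ind_interval_nonneg a d k : 0 <= ind_interval a d k.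
Proof. unfold ind_interval. destruct (andb _ _); lra. Qed.

Lemma sumR_ind_interval n a d : sumR n (ind_interval a d) = INR (Nat.min n (a + d) - Nat.min n a).
Proof.
  induction n as [|n IH]; [reflexivity|]. cbn [sumR]. rewrite IH. unfold ind_interval.
  destruct (Nat.leb_spec a n); destruct (Nat.ltb_spec n (a + d)); cbn [andb];
    [ replace (Nat.min (S n) (a + d) - Nat.min (S n) a)%nat
        with (S (Nat.min n (a + d) - Nat.min n a)) by lia; rewrite S_INR; lra
    | replace (Nat.min (S n) (a + d) - Nat.min (S n) a)%nat
        with (Nat.min n (a + d) - Nat.min n a)%nat by lia; lra .. ].
Qed.

Lemma sumR_ind_interval_le n a d : sumR n (ind_interval a d) <= INR d.
Proof. rewrite sumR_ind_interval. apply le_INR. lia. Qed.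

Section WindowCovariance.

Variables (n W M : nat) (phi : nat -> R) (c : R).
Hypothesis HM : (n - 1 + W <= M)%nat.
Hypothesis phi_bounds : forall w, 0 <= phi w <= c.

Let mu := avg W phi.
Let term j s := phi (window (n - 1 - j) W s).

(* Windows whose offsets differ by at least W are independent; the others are bounded crudely. *)
Lemma avg_window_mul_le j k : (j < n)%nat -> (k < n)%nat ->
  avg M (fun s => term j s * term k s) <= mu ^ 2 + c * mu * ind_interval (j + 1 - W) (2 * W) k.
Proof.
  intros Hj Hk. unfold term.
  assert (Hmu : 0 <= mu) by (apply avg_nonneg; intros; apply phi_bounds).
  assert (Hc : 0 <= c) by (destruct (phi_bounds 0%nat); lra).
  assert (0 <= c * mu * ind_interval (j + 1 - W) (2 * W) k)
    by (apply Rmult_le_pos; [apply Rmult_le_pos | apply ind_interval_nonneg]; auto).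
  destruct (le_lt_dec (j + W) k) as [Hfar|Hjk]; [|destruct (le_lt_dec (k + W) j) as [Hfar|Hkj]].
  - rewrite avg_window_mul by lia. fold mu. lra.
  - rewrite (avg_ext _ _ (fun s => phi (window (n - 1 - k) W s) * phi (window (n - 1 - j) W s)))
      by (intros; ring).
    rewrite avg_window_mul by lia. fold mu. lra.
  - replace (ind_interval (j + 1 - W) (2 * W) k) with 1.
    2:{ unfold ind_interval. destruct (Nat.leb_spec (j + 1 - W) k); [|lia].
        destruct (Nat.ltb_spec k (j + 1 - W + 2 * W)); [reflexivity|lia]. }
    apply Rle_trans with (avg M (fun s => c * phi (window (n - 1 - k) W s))).
    + apply avg_le; intros s _. apply Rmult_le_compat_r; apply phi_bounds.
    + rewrite avg_scal, avg_window by lia. fold mu. nra.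
Qed.

Lemma var_window_sum :
  avg M (fun s => (window_sum n W phi s - INR n * mu) ^ 2) <= INR n * (2 * INR W) * c * mu.
Proof.
  assert (Hmu : 0 <= mu) by (apply avg_nonneg; intros; apply phi_bounds).
  assert (Hc : 0 <= c) by (destruct (phi_bounds 0%nat); lra).
  rewrite (avg_ext _ _ (fun s => sumR n (fun j => sumR n (fun k => term j s * term k s))
      + (-2 * INR n * mu) * window_sum n W phi s + (INR n * mu) ^ 2)).
  2:{ intros s. rewrite <- sumR_prod. unfold term. fold (window_sum n W phi s). ring. }
  rewrite !avg_plus, avg_scal, avg_const, avg_window_sum by auto. fold mu.
  rewrite avg_sum, (sumR_ext _ _ (fun j => sumR n (fun k => avg M (fun s => term j s * term k s))))
    by (intros; apply avg_sum).
  assert (Hcov : sumR n (fun j => sumR n (fun k => avg M (fun s => term j s * term k s)))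
      <= sumR n (fun _ => INR n * mu ^ 2 + c * mu * (2 * INR W))).
  { apply sumR_le; intros j Hj.
    apply Rle_trans with (sumR n (fun k => mu ^ 2 + c * mu * ind_interval (j + 1 - W) (2 * W) k)).
    - apply sumR_le; intros k Hk. apply avg_window_mul_le; auto.
    - rewrite sumR_plus, sumR_const, sumR_scal_l.
      assert (Hcount := sumR_ind_interval_le n (j + 1 - W) (2 * W)).
      rewrite mult_INR in Hcount. simpl (INR 2) in Hcount.
      assert (0 <= c * mu) by (apply Rmult_le_pos; auto). nra. }
  rewrite sumR_const in Hcov. nra.
Qed.

End WindowCovariance.

Lemma ln_le_sub1 z : 0 < z -> ln z <= z - 1.
Proof. intros Hz. pose proof (exp_ineq1_le (ln z)) as H. rewrite exp_ln in H; lra. Qed.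

Lemma ln_le x y : 0 < x -> x <= y -> ln x <= ln y.
Proof. intros Hx [Hxy|<-]; [left; apply ln_increasing|]; lra. Qed.

Lemma ln_succ_sub_bounds y : 0 < y -> / (y + 1) <= ln (y + 1) - ln y <= / y.
Proof.
  intros Hy. split.
  - pose proof (ln_le_sub1 (y / (y + 1)) ltac:(apply Rdiv_lt_0_compat; lra)) as H.
    unfold Rdiv in H. rewrite ln_mult, ln_Rinv in H by (try apply Rinv_0_lt_compat; lra).
    replace (y * / (y + 1) - 1) with (- / (y + 1)) in H by (field; lra). lra.
  - pose proof (ln_le_sub1 ((y + 1) / y) ltac:(apply Rdiv_lt_0_compat; lra)) as H.
    unfold Rdiv in H. rewrite ln_mult, ln_Rinv in H by (try apply Rinv_0_lt_compat; lra).
    replace ((y + 1) * / y - 1) with (/ y) in H by (field; lra). lra.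
Qed.

Lemma ln_le_sumR_inv a K : 0 < a -> ln (a + INR K) - ln a <= sumR K (fun i => / (a + INR i)).
Proof.
  intros Ha. induction K as [|K IH]; cbn [sumR]; [simpl; rewrite Rplus_0_r; lra|].
  rewrite S_INR. pose proof (ln_succ_sub_bounds (a + INR K) ltac:(pose proof (pos_INR K); lra)).
  replace (a + (INR K + 1)) with (a + INR K + 1) by ring. lra.
Qed.

Lemma sumR_inv_succ_le a K : 0 < a ->
  sumR (S K) (fun i => / (a + INR i)) <= / a + ln (a + INR K) - ln a.
Proof.
  intros Ha. induction K as [|K IH]; [simpl; rewrite !Rplus_0_r; lra|].
  cbn [sumR] in *. rewrite S_INR.
  pose proof (ln_succ_sub_bounds (a + INR K) ltac:(pose proof (pos_INR K); lra)).
  replace (a + (INR K + 1)) with (a + INR K + 1) by ring. lra.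
Qed.

Lemma sumR_inv_le a K : 0 < a -> sumR K (fun i => / (a + INR i)) <= / a + ln (a + INR K) - ln a.
Proof.
  intros Ha. destruct K as [|K].
  - simpl. rewrite Rplus_0_r. pose proof (Rinv_0_lt_compat a Ha). lra.
  - pose proof (sumR_inv_succ_le a K Ha).
    assert (ln (a + INR K) <= ln (a + INR (S K)))
      by (rewrite S_INR; apply ln_le; pose proof (pos_INR K); lra). lra.
Qed.

Lemma inv_INR_le1 k : (1 <= k)%nat -> / INR k <= 1.
Proof.
  intros Hk. rewrite <- Rinv_1. apply Rinv_le_contravar; [lra|]. apply (le_INR 1); auto.
Qed.

Lemma div_le_compat_l P x y : 0 <= P -> 0 < x -> x <= y -> P / y <= P / x.
Proof. intros. unfold Rdiv. apply Rmult_le_compat_l; auto. apply Rinv_le_contravar; auto. Qed.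

Lemma pow2_div_INR_ge1 W w : (w <= 2 ^ W)%nat -> (1 <= w)%nat -> 1 <= 2 ^ W / INR w.
Proof.
  intros Hw Hw1. pose proof (lt_0_INR w ltac:(lia)). apply Rmult_le_reg_r with (INR w); auto.
  unfold Rdiv. rewrite Rmult_assoc, Rinv_l, Rmult_1_l, Rmult_1_r by lra.
  rewrite <- INR_pow2. apply le_INR; auto.
Qed.

(* Profiles of 2^W / w: [prof_hi] and [prof_lo] truncate it at level 2^W / m, from above
   and from below, and [prof_mid] is its part on [A, m); together they sandwich a_j on
   windows w >= A (lemma chi_window_profiles). *)
Definition prof_hi (W m w : nat) : R :=
  if (w =? 0)%nat then 0 else if (m <=? w)%nat then 2 ^ W / INR w else 2 ^ W / INR m.
Definition prof_lo (W m w : nat) : R :=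
  if andb (m <=? w + 1)%nat (w <? 2 ^ W)%nat then 2 ^ W / INR (w + 1) - 1 else 0.
Definition prof_mid (W A m w : nat) : R :=
  if andb (A <=? w)%nat (w <? m)%nat then 2 ^ W / INR w else 0.
Definition ind_zero (w : nat) : R := if (w =? 0)%nat then 1 else 0.
Definition ind_small (A w : nat) : R := if andb (1 <=? w)%nat (w <? A)%nat then 1 else 0.

Lemma ind_zero_nonneg w : 0 <= ind_zero w.
Proof. unfold ind_zero. destruct (_ =? _)%nat; lra. Qed.

Lemma ind_small_nonneg A w : 0 <= ind_small A w.
Proof. unfold ind_small. destruct (andb _ _); lra. Qed.

Lemma prof_mid_nonneg W A m w : 0 <= prof_mid W A m w.
Proof.
  unfold prof_mid. destruct (andb _ _); [|lra].
  destruct (Nat.eq_dec w 0) as [->|Hw].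
  - simpl (INR 0). unfold Rdiv. rewrite Rinv_0. lra.
  - apply Rlt_le, Rdiv_lt_0_compat; [apply pow2_pos_R | apply lt_0_INR; lia].
Qed.

Lemma prof_hi_bounds W m w : (1 <= m)%nat -> 0 <= prof_hi W m w <= 2 ^ W / INR m.
Proof.
  intros Hm1. pose proof (pow2_pos_R W). pose proof (lt_0_INR m ltac:(lia)).
  assert (0 < 2 ^ W / INR m) by (apply Rdiv_lt_0_compat; lra).
  unfold prof_hi. destruct (Nat.eqb_spec w 0); [lra|].
  destruct (Nat.leb_spec m w); [|lra]. split.
  - apply Rlt_le, Rdiv_lt_0_compat; auto. apply lt_0_INR; lia.
  - apply div_le_compat_l; [lra|lra|]. apply le_INR; auto.
Qed.

Lemma prof_lo_bounds W m w : (1 <= m)%nat -> 0 <= prof_lo W m w <= 2 ^ W / INR m.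
Proof.
  intros Hm1. pose proof (pow2_pos_R W). pose proof (lt_0_INR m ltac:(lia)).
  assert (0 < 2 ^ W / INR m) by (apply Rdiv_lt_0_compat; lra).
  unfold prof_lo. destruct (Nat.leb_spec m (w + 1)); destruct (Nat.ltb_spec w (2 ^ W));
    simpl; try lra.
  pose proof (pow2_div_INR_ge1 W (w + 1) ltac:(lia) ltac:(lia)).
  assert (2 ^ W / INR (w + 1) <= 2 ^ W / INR m)
    by (apply div_le_compat_l; [lra|lra|apply le_INR; auto]). lra.
Qed.

Lemma prof_lo_le_hi W m w : (2 <= m)%nat -> prof_lo W m w <= prof_hi W m w.
Proof.
  intros Hm. pose proof (pow2_pos_R W). destruct (prof_hi_bounds W m w ltac:(lia)) as [Hh _].
  unfold prof_lo. destruct (Nat.leb_spec m (w + 1)); destruct (Nat.ltb_spec w (2 ^ W));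
    simpl; try lra.
  unfold prof_hi. destruct (Nat.eqb_spec w 0); [lia|]. destruct (Nat.leb_spec m w).
  - assert (2 ^ W / INR (w + 1) <= 2 ^ W / INR w)
      by (apply div_le_compat_l; [lra | apply lt_0_INR; lia | apply le_INR; lia]). lra.
  - replace (w + 1)%nat with m by lia. lra.
Qed.

Lemma avg_ind_zero W : avg W ind_zero = / 2 ^ W.
Proof.
  unfold avg. rewrite (sumR_split _ 1) by apply pow2_pos.
  rewrite (sumR_ext (2 ^ W - 1) _ (fun _ => 0)).
  - rewrite sumR_const. unfold ind_zero. simpl. field. apply Rgt_not_eq, pow2_pos_R.
  - intros i _. unfold ind_zero. destruct (Nat.eqb_spec (1 + i) 0); [lia|auto].
Qed.

Lemma avg_ind_small_le W A : (A <= 2 ^ W)%nat -> avg W (ind_small A) <= INR A / 2 ^ W.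
Proof.
  intros H. unfold avg. apply Rmult_le_compat_r; [left; apply Rinv_0_lt_compat, pow2_pos_R|].
  rewrite (sumR_split _ A) by auto.
  rewrite (sumR_ext (2 ^ W - A) _ (fun _ => 0)).
  2:{ intros i _. unfold ind_small. destruct (Nat.ltb_spec (A + i) A); [lia|].
      rewrite Bool.andb_false_r; auto. }
  rewrite sumR_const, Rmult_0_r, Rplus_0_r, <- (Rmult_1_r (INR A)), <- sumR_const.
  apply sumR_le. intros i _. unfold ind_small. destruct (andb _ _); lra.
Qed.

Lemma avg_prof_mid_le W A m : (1 <= A)%nat -> (A <= m)%nat -> (m <= 2 ^ W)%nat ->
  avg W (prof_mid W A m) <= 1 + ln (INR m) - ln (INR A).
Proof.
  intros H1 H2 H3. unfold avg.
  rewrite (sumR_split _ A) by lia. rewrite (sumR_split (2 ^ W - A) (m - A)) by lia.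
  rewrite (sumR_ext A _ (fun _ => 0)).
  2:{ intros i Hi. unfold prof_mid. destruct (Nat.leb_spec A i); [lia|auto]. }
  rewrite (sumR_ext (2 ^ W - A - (m - A)) _ (fun _ => 0)).
  2:{ intros i Hi. unfold prof_mid. destruct (Nat.ltb_spec (A + (m - A + i)) m); [lia|].
      rewrite Bool.andb_false_r; auto. }
  rewrite (sumR_ext (m - A) _ (fun i => 2 ^ W * / (INR A + INR i))).
  2:{ intros i Hi. unfold prof_mid. destruct (Nat.leb_spec A (A + i)); [|lia].
      destruct (Nat.ltb_spec (A + i) m); [|lia]. simpl. rewrite plus_INR. auto. }
  rewrite !sumR_const, sumR_scal_l. pose proof (lt_0_INR A ltac:(lia)) as HA.
  pose proof (sumR_inv_le (INR A) (m - A) HA) as Hh. rewrite minus_INR in Hh by lia.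
  replace (INR A + (INR m - INR A)) with (INR m) in Hh by ring.
  pose proof (inv_INR_le1 A H1). pose proof (pow2_pos_R W).
  apply Rmult_le_reg_r with (2 ^ W); auto. unfold Rdiv.
  rewrite Rmult_assoc, Rinv_l by lra. nra.
Qed.

Lemma avg_prof_hi_le W m : (1 <= m)%nat -> (m <= 2 ^ W)%nat ->
  avg W (prof_hi W m) <= 2 + ln (2 ^ W) - ln (INR m).
Proof.
  intros H1 H3. unfold avg. pose proof (pow2_pos_R W). pose proof (lt_0_INR m ltac:(lia)).
  rewrite (sumR_split _ m) by lia.
  assert (Hhead : sumR m (prof_hi W m) <= 2 ^ W).
  { apply Rle_trans with (sumR m (fun _ => 2 ^ W / INR m)).
    - apply sumR_le. intros i Hi. apply prof_hi_bounds; lia.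
    - rewrite sumR_const. right; field; lra. }
  rewrite (sumR_ext (2 ^ W - m) _ (fun i => 2 ^ W * / (INR m + INR i))).
  2:{ intros i Hi. unfold prof_hi. destruct (Nat.eqb_spec (m + i) 0); [lia|].
      destruct (Nat.leb_spec m (m + i)); [|lia]. rewrite plus_INR; auto. }
  rewrite sumR_scal_l. pose proof (sumR_inv_le (INR m) (2 ^ W - m) ltac:(auto)) as Hh.
  rewrite minus_INR, INR_pow2 in Hh by lia.
  replace (INR m + (2 ^ W - INR m)) with (2 ^ W) in Hh by ring.
  pose proof (inv_INR_le1 m H1).
  apply Rmult_le_reg_r with (2 ^ W); auto. unfold Rdiv.
  rewrite Rmult_assoc, Rinv_l by lra. nra.
Qed.

Lemma avg_prof_lo_ge W m : (1 <= m)%nat -> (m <= 2 ^ W)%nat ->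
  ln (2 ^ W) - ln (INR m) - 1 <= avg W (prof_lo W m).
Proof.
  intros H1 H3. unfold avg. pose proof (pow2_pos_R W). pose proof (lt_0_INR m ltac:(lia)).
  rewrite (sumR_split _ (m - 1)) by lia.
  assert (Hhead : 0 <= sumR (m - 1) (prof_lo W m))
    by (apply sumR_nonneg; intros; apply prof_lo_bounds; lia).
  rewrite (sumR_ext (2 ^ W - (m - 1)) _ (fun i => 2 ^ W * / (INR m + INR i) - 1)).
  2:{ intros i Hi. unfold prof_lo. destruct (Nat.leb_spec m (m - 1 + i + 1)); [|lia].
      destruct (Nat.ltb_spec (m - 1 + i) (2 ^ W)); [|lia]. simpl.
      replace (m - 1 + i + 1)%nat with (m + i)%nat by lia. rewrite plus_INR; auto. }
  rewrite sumR_minus, sumR_scal_l, sumR_const.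
  pose proof (ln_le_sumR_inv (INR m) (2 ^ W - (m - 1)) ltac:(auto)) as Hh.
  rewrite !minus_INR, INR_pow2 in * by lia. simpl (INR 1) in *.
  assert (ln (2 ^ W) <= ln (INR m + (2 ^ W - (INR m - 1)))) by (apply ln_le; lra).
  assert (1 <= INR m) by (apply (le_INR 1); auto).
  apply Rmult_le_reg_r with (2 ^ W); auto. unfold Rdiv.
  rewrite Rmult_assoc, Rinv_l by lra. nra.
Qed.

Lemma Int_part_eq r z : IZR z <= r < IZR z + 1 -> Int_part r = z.
Proof. intros H. symmetry. apply Int_part_spec. lra. Qed.

Lemma tau_iter_frac j x : 0 <= x < 1 -> tau_iter j x = 2 ^ j * x - IZR (Int_part (2 ^ j * x)).
Proof.
  intros Hx. induction j as [|j IH]; simpl tau_iter.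
  - replace (2 ^ 0 * x) with x by (simpl; ring). rewrite (Int_part_eq x 0%Z); simpl; lra.
  - rewrite IH. unfold tau. set (z := Int_part (2 ^ j * x)).
    pose proof (base_Int_part (2 ^ S j * x)) as H1. simpl pow in H1.
    assert (Hz : Int_part (2 * (2 ^ j * x - IZR z)) = (Int_part (2 * 2 ^ j * x) - 2 * z)%Z).
    { apply Int_part_eq. rewrite minus_IZR, mult_IZR. simpl (IZR 2). lra. }
    rewrite Hz, minus_IZR, mult_IZR. simpl pow. simpl (IZR 2). lra.
Qed.

Lemma Int_part_nat r : 0 <= r ->
  INR (Z.to_nat (Int_part r)) <= r < INR (Z.to_nat (Int_part r)) + 1.
Proof.
  intros H. pose proof (base_Int_part r) as B.
  assert (Hz : (0 <= Int_part r)%Z)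
    by (assert (-1 < Int_part r)%Z by (apply lt_IZR; simpl; lra); lia).
  rewrite INR_IZR_INZ, Z2Nat.id by auto. lra.
Qed.

Definition digits (M : nat) (x : R) : nat := Z.to_nat (Int_part (2 ^ M * x)).

Lemma digits_spec M x : 0 <= x < 1 ->
  INR (digits M x) <= 2 ^ M * x < INR (digits M x) + 1 /\ (digits M x < 2 ^ M)%nat.
Proof.
  intros Hx. pose proof (pow2_pos_R M).
  destruct (Int_part_nat (2 ^ M * x)) as [H1 H2]; [nra|].
  unfold digits. repeat split; auto. apply INR_lt. rewrite INR_pow2. nra.
Qed.

Lemma div_pow2_floor M e x s : (e <= M)%nat -> INR s <= 2 ^ M * x < INR s + 1 ->
  INR (s / 2 ^ e) <= 2 ^ (M - e) * x < INR (s / 2 ^ e) + 1.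
Proof.
  intros He [H1 H2]. set (u := (s / 2 ^ e)%nat).
  assert (Hne : (2 ^ e <> 0)%nat) by (apply Nat.pow_nonzero; lia).
  assert (Ha : (2 ^ e * u <= s)%nat) by apply Nat.Div0.mul_div_le.
  assert (Hb : (s < 2 ^ e * S u)%nat) by (apply Nat.mul_succ_div_gt; auto).
  change (S s <= 2 ^ e * S u)%nat in Hb.
  apply le_INR in Ha, Hb. rewrite mult_INR, INR_pow2 in Ha.
  rewrite S_INR, mult_INR, INR_pow2, S_INR in Hb.
  assert (HM : 2 ^ M = 2 ^ (M - e) * 2 ^ e) by (rewrite <- pow_add; f_equal; lia).
  rewrite HM in H1, H2. pose proof (pow2_pos_R e). split; nra.
Qed.

(* Scaled by 2^W, the j-th iterate of the doubling map lies in the window of digits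
   j+1, ..., j+W of x. *)
Lemma tau_iter_window n W x j : 0 <= x < 1 -> (j < n)%nat ->
  let w := window (n - 1 - j) W (digits (n - 1 + W) x) in
  INR w <= 2 ^ W * tau_iter j x < INR w + 1.
Proof.
  intros Hx Hj w. set (M := (n - 1 + W)%nat) in w. set (s := digits M x) in w.
  set (e := (n - 1 - j)%nat) in w.
  destruct (digits_spec M x Hx) as [Hs _]. fold s in Hs.
  pose proof (div_pow2_floor M e x s ltac:(lia) Hs) as Hu.
  pose proof (div_pow2_floor M (e + W) x s ltac:(lia) Hs) as Hv.
  replace (M - e)%nat with (j + W)%nat in Hu by lia.
  replace (M - (e + W))%nat with j in Hv by lia.
  set (u := (s / 2 ^ e)%nat) in *. set (v := (s / 2 ^ (e + W))%nat) in *.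
  assert (Hvu : v = (u / 2 ^ W)%nat) by (unfold v, u; rewrite Nat.Div0.div_div, Nat.pow_add_r; auto).
  assert (Hdm : u = (2 ^ W * v + w)%nat)
    by (unfold w, window; fold u; rewrite Hvu; apply Nat.div_mod_eq).
  rewrite tau_iter_frac by auto.
  rewrite (Int_part_eq (2 ^ j * x) (Z.of_nat v)) by (rewrite <- INR_IZR_INZ; lra).
  rewrite <- INR_IZR_INZ. apply (f_equal INR) in Hdm. rewrite plus_INR, mult_INR, INR_pow2 in Hdm.
  rewrite pow_add in Hu. nra.
Qed.

Lemma chi_window W y w : (1 <= w)%nat -> INR w <= 2 ^ W * y < INR w + 1 ->
  exists t, chi y = Some t /\ 2 ^ W / INR (w + 1) - 1 <= INR t <= 2 ^ W / INR w.
Proof.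
  intros Hw Hy. pose proof (pow2_pos_R W). pose proof (lt_0_INR w ltac:(lia)).
  assert (Hy0 : 0 < y) by nra.
  unfold chi. destruct (Req_EM_T y 0); [lra|].
  exists (Z.to_nat (Int_part (/ y))). split; auto.
  destruct (Int_part_nat (/ y)) as [H1 H2]; [left; apply Rinv_0_lt_compat; auto|].
  assert (E1 : / y <= 2 ^ W / INR w).
  { replace (2 ^ W / INR w) with (/ (INR w / 2 ^ W)) by (field; lra).
    apply Rinv_le_contravar; [apply Rdiv_lt_0_compat; lra|].
    apply Rmult_le_reg_l with (2 ^ W); auto. field_simplify; lra. }
  assert (E2 : 2 ^ W / INR (w + 1) < / y).
  { rewrite plus_INR. change (INR 1) with 1.
    replace (2 ^ W / (INR w + 1)) with (/ ((INR w + 1) / 2 ^ W)) by (field; lra).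
    apply Rinv_lt_contravar; [apply Rmult_lt_0_compat; auto; apply Rdiv_lt_0_compat; lra|].
    apply Rmult_lt_reg_l with (2 ^ W); auto. field_simplify; lra. }
  lra.
Qed.

Lemma chi_window_profiles W A m y w : (1 <= A)%nat -> (A <= w)%nat -> (w < 2 ^ W)%nat ->
  INR w <= 2 ^ W * y < INR w + 1 ->
  exists t, chi y = Some t /\ prof_lo W m w <= INR t <= prof_hi W m w + prof_mid W A m w.
Proof.
  intros HA Hw HwW Hy. pose proof (pow2_pos_R W).
  destruct (chi_window W y w ltac:(lia) Hy) as [t [Ht Hbounds]].
  exists t. split; auto. split.
  - apply Rle_trans with (2 ^ W / INR (w + 1) - 1); [|lra].
    pose proof (pow2_div_INR_ge1 W (w + 1) ltac:(lia) ltac:(lia)).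
    unfold prof_lo. destruct (andb _ _); lra.
  - apply Rle_trans with (2 ^ W / INR w); [lra|].
    unfold prof_hi, prof_mid. destruct (Nat.eqb_spec w 0); [lia|].
    destruct (Nat.leb_spec m w); destruct (Nat.leb_spec A w); destruct (Nat.ltb_spec w m);
      try lia; simpl.
    + assert (0 <= 2 ^ W / INR w) by (apply Rlt_le, Rdiv_lt_0_compat; [lra | apply lt_0_INR; lia]).
      lra.
    + assert (0 <= 2 ^ W / INR m) by (apply Rlt_le, Rdiv_lt_0_compat; [lra | apply lt_0_INR; lia]).
      lra.
Qed.

Lemma Ssum_sandwich x n lo hi :
  (forall j, (j < n)%nat -> exists t, a (S j) x = Some t /\ lo j <= INR t <= hi j) ->
  exists S, Ssum n x = Some S /\ sumR n lo <= INR S <= sumR n hi.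
Proof.
  induction n as [|n IH]; intros H.
  - exists 0%nat. simpl. split; auto; lra.
  - destruct IH as [S0 [HS0 HB]]; [intros j Hj; apply H; lia|].
    destruct (H n ltac:(lia)) as [t [Ht Htb]].
    exists (S0 + t)%nat. simpl Ssum. rewrite HS0, Ht. split; auto.
    cbn [sumR]. rewrite plus_INR. lra.
Qed.

Lemma sq_div_nonneg d t : 0 < t -> 0 <= d ^ 2 / t ^ 2.
Proof. intros Ht. apply Rmult_le_pos; [apply pow2_ge_0 | left; apply Rinv_0_lt_compat, pow_lt; auto]. Qed.

Lemma sq_div_ge1 d t : 0 < t -> t <= Rabs d -> 1 <= d ^ 2 / t ^ 2.
Proof.
  intros Ht Hd. assert (t ^ 2 <= d ^ 2) by (rewrite <- (pow2_abs d); apply pow_incr; lra).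
  apply Rmult_le_reg_r with (t ^ 2); [apply pow_lt; auto|].
  unfold Rdiv. rewrite Rmult_assoc, Rinv_l by (apply Rgt_not_eq, pow_lt; auto). lra.
Qed.

Lemma deviation_forces_majorant eps b S lo hi mid mlo mhi :
  0 < eps -> 0 < b -> 0 <= mid -> lo <= S <= hi + mid ->
  mhi <= b -> (1 - eps / 2) * b <= mlo -> Rabs (S / b - 1) > eps ->
  1 <= 2 / (eps * b) * mid + (hi - mhi) ^ 2 / (eps * b / 2) ^ 2 + (lo - mlo) ^ 2 / (eps * b / 2) ^ 2.
Proof.
  intros He Hb Hmid [Hlo Hhi] Hmhi Hmlo Hdev.
  assert (Ht : 0 < eps * b / 2) by (apply Rdiv_lt_0_compat; [apply Rmult_lt_0_compat|]; lra).
  pose proof (sq_div_nonneg (hi - mhi) _ Ht). pose proof (sq_div_nonneg (lo - mlo) _ Ht).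
  assert (0 <= 2 / (eps * b) * mid)
    by (apply Rmult_le_pos; [apply Rlt_le, Rdiv_lt_0_compat; [lra | apply Rmult_lt_0_compat] | ]; lra).
  assert (Hdev' : S < (1 - eps) * b \/ (1 + eps) * b < S).
  { unfold Rabs in Hdev. destruct (Rcase_abs (S / b - 1)).
    - left. apply Rmult_lt_reg_r with (/ b); [apply Rinv_0_lt_compat; lra|].
      rewrite Rmult_assoc, Rinv_r by lra. unfold Rdiv in *. lra.
    - right. apply Rmult_lt_reg_r with (/ b); [apply Rinv_0_lt_compat; lra|].
      rewrite Rmult_assoc, Rinv_r by lra. unfold Rdiv in *. lra. }
  destruct Hdev' as [Hbelow|Habove].
  - assert (1 <= (lo - mlo) ^ 2 / (eps * b / 2) ^ 2)
      by (apply sq_div_ge1; auto; rewrite Rabs_left1 by lra; lra). lra.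
  - destruct (Rle_dec (eps * b / 2) mid).
    + assert (1 <= 2 / (eps * b) * mid).
      { apply Rmult_le_reg_l with (eps * b / 2); auto. rewrite <- Rmult_assoc.
        replace (eps * b / 2 * (2 / (eps * b))) with 1 by (field; lra). lra. }
      lra.
    + assert (1 <= (hi - mhi) ^ 2 / (eps * b / 2) ^ 2)
        by (apply sq_div_ge1; auto; rewrite Rabs_right by lra; lra). lra.
Qed.

Lemma ind_zero_add_small_ge1 A w : (w < A)%nat -> 1 <= ind_zero w + ind_small A w.
Proof.
  intros Hw. pose proof (ind_small_nonneg A w). unfold ind_zero, ind_small in *.
  destruct (Nat.eqb_spec w 0); [lra|].
  destruct (Nat.leb_spec 1 w); [|lia]. destruct (Nat.ltb_spec w A); [simpl; lra | lia].
Qed.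

Section Majorant.

Variables (n W m A : nat) (eps : R).
Hypothesis eps_pos : 0 < eps.
Hypothesis A_pos : (1 <= A)%nat.
Hypothesis A_le_m : (A <= m)%nat.
Hypothesis m_ge2 : (2 <= m)%nat.
Hypothesis m_le : (m <= 2 ^ W)%nat.

Let b := INR n * ln (INR n).
Hypothesis n_ln_n_pos : 0 < b.
Let t := eps * b / 2.
Let mu_hi := avg W (prof_hi W m).
Let mu_lo := avg W (prof_lo W m).

Definition small_window_count (s : nat) : R :=
  window_sum n W ind_zero s + window_sum n W (ind_small A) s.

Definition deviation_majorant (s : nat) : R :=
  2 / (eps * b) * window_sum n W (prof_mid W A m) s
  + (window_sum n W (prof_hi W m) s - INR n * mu_hi) ^ 2 / t ^ 2
  + (window_sum n W (prof_lo W m) s - INR n * mu_lo) ^ 2 / t ^ 2.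

(* A function of the first n-1+W digits dominating the indicator of the deviation
   event: the window counts catch small windows, the rest is Markov's inequality for
   the middle profile and Chebyshev's inequality for the two truncated profiles. *)
Definition bad_majorant (s : nat) : R := small_window_count s + deviation_majorant s.

Lemma majorant_scale_pos : 0 < t.
Proof. unfold t. apply Rdiv_lt_0_compat; [apply Rmult_lt_0_compat|]; lra. Qed.

Lemma small_window_count_nonneg s : 0 <= small_window_count s.
Proof.
  pose proof (window_sum_nonneg n W _ s ind_zero_nonneg).
  pose proof (window_sum_nonneg n W _ s (ind_small_nonneg A)).
  unfold small_window_count. lra.
Qed.

Lemma deviation_majorant_nonneg s : 0 <= deviation_majorant s.
Proof.
  pose proof (window_sum_nonneg n W _ s (prof_mid_nonneg W A m)).
  assert (0 < 2 / (eps * b)) by (apply Rdiv_lt_0_compat; [lra | apply Rmult_lt_0_compat; auto]).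
  pose proof (sq_div_nonneg (window_sum n W (prof_hi W m) s - INR n * mu_hi) _ majorant_scale_pos).
  pose proof (sq_div_nonneg (window_sum n W (prof_lo W m) s - INR n * mu_lo) _ majorant_scale_pos).
  unfold deviation_majorant. nra.
Qed.

Lemma bad_majorant_nonneg s : 0 <= bad_majorant s.
Proof.
  pose proof (small_window_count_nonneg s). pose proof (deviation_majorant_nonneg s).
  unfold bad_majorant. lra.
Qed.

Lemma small_window_count_ge1 s j : (j < n)%nat -> (window (n - 1 - j) W s < A)%nat ->
  1 <= small_window_count s.
Proof.
  intros Hj Hw.
  pose proof (sumR_term_le n (fun j => ind_zero (window (n - 1 - j) W s)) j
    (fun i _ => ind_zero_nonneg _) Hj).
  pose proof (sumR_term_le n (fun j => ind_small A (window (n - 1 - j) W s)) j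
    (fun i _ => ind_small_nonneg A _) Hj).
  pose proof (ind_zero_add_small_ge1 A _ Hw). unfold small_window_count, window_sum. lra.
Qed.

Lemma Ssum_window_sandwich x : 0 <= x < 1 ->
  let s := digits (n - 1 + W) x in
  (forall j, (j < n)%nat -> (A <= window (n - 1 - j) W s)%nat) ->
  exists S, Ssum n x = Some S /\
    window_sum n W (prof_lo W m) s <= INR S
    <= window_sum n W (prof_hi W m) s + window_sum n W (prof_mid W A m) s.
Proof.
  intros Hx s Hall. unfold window_sum. rewrite <- sumR_plus. apply Ssum_sandwich.
  intros j Hj. unfold a. replace (S j - 1)%nat with j by lia.
  apply chi_window_profiles; auto; [apply window_lt | apply tau_iter_window; auto].
Qed.

Lemma deviation_event_majorant x :
  INR n * mu_hi <= b -> (1 - eps / 2) * b <= INR n * mu_lo ->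
  deviation_event eps n x -> 1 <= bad_majorant (digits (n - 1 + W) x).
Proof.
  intros Hhi Hlo [Hx Hdev]. set (s := digits (n - 1 + W) x).
  pose proof (small_window_count_nonneg s). pose proof (deviation_majorant_nonneg s).
  unfold bad_majorant.
  destruct (classic (exists j, (j < n)%nat /\ (window (n - 1 - j) W s < A)%nat))
    as [[j [Hj Hw]]|Hnone].
  - pose proof (small_window_count_ge1 s j Hj Hw). lra.
  - destruct (Ssum_window_sandwich x Hx) as [S [HS Hsand]].
    { intros j Hj. destruct (le_lt_dec A (window (n - 1 - j) W s)); auto.
      exfalso; apply Hnone; eauto. }
    rewrite HS in Hdev. fold s in Hsand.
    pose proof (deviation_forces_majorant eps b (INR S) _ _ _ _ _ eps_pos n_ln_n_pos
      (window_sum_nonneg n W _ s (prof_mid_nonneg W A m)) Hsand Hhi Hlo Hdev) as Hforce.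
    fold t in Hforce. unfold deviation_majorant. lra.
Qed.

Lemma avg_bad_majorant :
  avg (n - 1 + W) bad_majorant =
    INR n / 2 ^ W + INR n * avg W (ind_small A) + 2 / (eps * b) * (INR n * avg W (prof_mid W A m))
    + avg (n - 1 + W) (fun s => (window_sum n W (prof_hi W m) s - INR n * mu_hi) ^ 2) / t ^ 2
    + avg (n - 1 + W) (fun s => (window_sum n W (prof_lo W m) s - INR n * mu_lo) ^ 2) / t ^ 2.
Proof.
  unfold bad_majorant, small_window_count, deviation_majorant.
  rewrite (avg_ext _ _ (fun s => window_sum n W ind_zero s + window_sum n W (ind_small A) s
    + 2 / (eps * b) * window_sum n W (prof_mid W A m) s
    + / t ^ 2 * (window_sum n W (prof_hi W m) s - INR n * mu_hi) ^ 2
    + / t ^ 2 * (window_sum n W (prof_lo W m) s - INR n * mu_lo) ^ 2)) by (intros; unfold Rdiv; ring).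
  rewrite !avg_plus, !avg_scal, !avg_window_sum, avg_ind_zero by lia. unfold Rdiv. ring.
Qed.

Lemma avg_bad_majorant_le :
  avg (n - 1 + W) bad_majorant <=
    INR n / 2 ^ W + INR n * INR A / 2 ^ W + 2 / (eps * b) * (INR n * (1 + ln (INR m) - ln (INR A)))
    + 2 * (INR n * (2 * INR W) * (2 ^ W / INR m) * mu_hi) / t ^ 2.
Proof.
  rewrite avg_bad_majorant.
  assert (Ht2 : 0 < / t ^ 2) by (apply Rinv_0_lt_compat, pow_lt, majorant_scale_pos).
  assert (Hk : 0 < 2 / (eps * b)) by (apply Rdiv_lt_0_compat; [lra | apply Rmult_lt_0_compat; auto]).
  pose proof (pos_INR n). pose proof (pos_INR W).
  assert (Hc : 0 < 2 ^ W / INR m) by (apply Rdiv_lt_0_compat; [apply pow2_pos_R | apply lt_0_INR; lia]).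
  assert (Hsmall : INR n * avg W (ind_small A) <= INR n * INR A / 2 ^ W).
  { unfold Rdiv. rewrite Rmult_assoc. apply Rmult_le_compat_l; auto. apply avg_ind_small_le; lia. }
  assert (Hmid : 2 / (eps * b) * (INR n * avg W (prof_mid W A m))
                 <= 2 / (eps * b) * (INR n * (1 + ln (INR m) - ln (INR A)))).
  { apply Rmult_le_compat_l; [lra|]. apply Rmult_le_compat_l; auto. apply avg_prof_mid_le; lia. }
  pose proof (var_window_sum n W (n - 1 + W) (prof_hi W m) (2 ^ W / INR m) ltac:(lia)
    (fun w => prof_hi_bounds W m w ltac:(lia))) as Vhi.
  pose proof (var_window_sum n W (n - 1 + W) (prof_lo W m) (2 ^ W / INR m) ltac:(lia)
    (fun w => prof_lo_bounds W m w ltac:(lia))) as Vlo.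
  fold mu_hi mu_lo in Vhi, Vlo.
  assert (Vlo' : avg (n - 1 + W) (fun s => (window_sum n W (prof_lo W m) s - INR n * mu_lo) ^ 2)
                 <= INR n * (2 * INR W) * (2 ^ W / INR m) * mu_hi).
  { eapply Rle_trans; [apply Vlo|]. apply Rmult_le_compat_l.
    - apply Rmult_le_pos; [|lra]. apply Rmult_le_pos; lra.
    - apply avg_le; intros; apply prof_lo_le_hi; lia. }
  unfold Rdiv. nra.
Qed.

End Majorant.

Lemma Rdiv_le_of_le_mul a b c : 0 < c -> a <= b * c -> a / c <= b.
Proof. intros Hc H. apply Rmult_le_reg_r with c; auto. unfold Rdiv. rewrite Rmult_assoc, Rinv_l; lra. Qed.

Lemma sumR_markov M F : (forall s, 0 <= F s) ->
  sumR (2 ^ M) (fun i => if Rle_dec 1 (F i) then / 2 ^ M else 0) <= avg M F.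
Proof.
  intros Hnn. pose proof (Rinv_0_lt_compat _ (pow2_pos_R M)).
  unfold avg, Rdiv. rewrite <- sumR_scal_r. apply sumR_le; intros i _.
  destruct (Rle_dec 1 (F i)).
  - rewrite <- (Rmult_1_l (/ 2 ^ M)) at 1. apply Rmult_le_compat_r; lra.
  - apply Rmult_le_pos; [apply Hnn | lra].
Qed.

(* Cover each dyadic interval [i / 2^M, (i+1) / 2^M) with F i >= 1 by a slightly
   enlarged open interval. *)
Lemma outer_measure_le_digit_markov M (F : nat -> R) (E : R -> Prop) delta :
  0 < delta -> (forall s, 0 <= F s) -> avg M F <= delta / 2 ->
  (forall x, E x -> 0 <= x < 1 /\ 1 <= F (digits M x)) ->
  outer_measure_le E delta.
Proof.
  intros Hd Hnn Hav Hcov. pose proof (pow2_pos_R M) as HP.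
  set (eta := delta / (2 * 2 ^ M)).
  assert (Heta : 0 < eta) by (unfold eta; apply Rdiv_lt_0_compat; lra).
  set (chosen i := andb (i <? 2 ^ M)%nat (if Rle_dec 1 (F i) then true else false)).
  exists (fun i => if chosen i then INR i / 2 ^ M - eta else 0).
  exists (fun i => if chosen i then (INR i + 1) / 2 ^ M else 0).
  split; [|split].
  - intros i. destruct (chosen i); [|lra].
    assert (INR i / 2 ^ M <= (INR i + 1) / 2 ^ M)
      by (unfold Rdiv; apply Rmult_le_compat_r; [left; apply Rinv_0_lt_compat|]; lra).
    lra.
  - intros x Hx. destruct (Hcov x Hx) as [Hx01 HF]. exists (digits M x).
    destruct (digits_spec M x Hx01) as [[H1 H2] H3].
    replace (chosen (digits M x)) with true.
    2:{ unfold chosen. destruct (Nat.ltb_spec (digits M x) (2 ^ M)); [|lia].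
        destruct (Rle_dec 1 (F (digits M x))); auto; lra. }
    split.
    + assert (INR (digits M x) / 2 ^ M <= x) by (apply Rdiv_le_of_le_mul; lra). lra.
    + apply Rmult_lt_reg_r with (2 ^ M); auto. unfold Rdiv. rewrite Rmult_assoc, Rinv_l; lra.
  - intros N. rewrite sum_f_R0_sumR.
    set (len i := (if chosen i then (INR i + 1) / 2 ^ M else 0)
                  - (if chosen i then INR i / 2 ^ M - eta else 0)).
    assert (Hlen : forall i, len i = if chosen i then / 2 ^ M + eta else 0)
      by (intros i; unfold len; destruct (chosen i); [field|]; lra).
    apply Rle_trans with (sumR (2 ^ M) len).
    { apply sumR_zero_tail.
      - intros i Hi. rewrite Hlen. unfold chosen. destruct (Nat.ltb_spec i (2 ^ M)); [lia|auto].
      - intros i. rewrite Hlen. pose proof (Rinv_0_lt_compat _ HP). destruct (chosen i); lra. }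
    apply Rle_trans with (sumR (2 ^ M) (fun i => (if Rle_dec 1 (F i) then / 2 ^ M else 0) + eta)).
    { apply sumR_le. intros i Hi. rewrite Hlen. unfold chosen.
      destruct (Nat.ltb_spec i (2 ^ M)); [|lia]. destruct (Rle_dec 1 (F i)); simpl; lra. }
    rewrite sumR_plus, sumR_const, INR_pow2. pose proof (sumR_markov M F Hnn).
    replace (2 ^ M * eta) with (delta / 2) by (unfold eta; field; lra). lra.
Qed.

Lemma ln2_bounds : / 2 < ln 2 <= 1.
Proof. split; [apply ln_lt_2 | pose proof (ln_le_sub1 2 ltac:(lra)); lra]. Qed.

Lemma ln_pow2 k : ln (2 ^ k) = INR k * ln 2.
Proof. apply ln_pow; lra. Qed.

Lemma le_mul_of_div_le a b c : 0 < c -> a / c <= b -> a <= b * c.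
Proof.
  intros Hc H. replace a with (a / c * c) by (field; lra). apply Rmult_le_compat_r; lra.
Qed.

Section ParameterChoice.

Variables (eps delta : R) (p r q n : nat).
Hypothesis eps_pos : 0 < eps.
Hypothesis delta_pos : 0 < delta.
Hypothesis r_ge4 : (4 <= r)%nat.
Hypothesis r_le_p : (r <= p)%nat.
Hypothesis q_le_p : (q <= p)%nat.
Hypothesis n_ge : (2 ^ p <= n)%nat.
Hypothesis n_lt : (n < 2 ^ S p)%nat.
Hypothesis r_large : 1280 / (eps ^ 2 * delta) <= 2 ^ r.
Hypothesis q_large : 20 / delta <= 2 ^ q.
Hypothesis p_large_delta : 10 / delta <= INR p.
Hypothesis p_large_rq : 40 * (1 + (INR r + INR q)) / (eps * delta) <= INR p.
Hypothesis p_large_r : 2 * (INR r + 3) / eps <= INR p.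

Let W := (2 * p + 2)%nat.
Let m := (2 ^ (p + 2 + r))%nat.
Let A := (2 ^ (p + 2 - q))%nat.
Let L := ln (INR n).

Lemma p_ge1 : 1 <= INR p.
Proof.
  assert (0 < 10 / delta) by (apply Rdiv_lt_0_compat; lra).
  destruct (Nat.eq_dec p 0) as [Hp0|Hp0]; [rewrite Hp0 in *; simpl in *; lra|].
  apply (le_INR 1). lia.
Qed.

Lemma A_pos : (1 <= A)%nat.
Proof. apply pow2_pos. Qed.

Lemma A_le_m : (A <= m)%nat.
Proof. apply Nat.pow_le_mono_r; lia. Qed.

Lemma m_ge2 : (2 <= m)%nat.
Proof.
  unfold m. replace (p + 2 + r)%nat with (S (p + 1 + r)) by lia.
  rewrite Nat.pow_succ_r'. pose proof (pow2_pos (p + 1 + r)). lia.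
Qed.

Lemma m_le_pow2W : (m <= 2 ^ W)%nat.
Proof. apply Nat.pow_le_mono_r; unfold W; lia. Qed.

Lemma INR_n_bounds : 2 ^ p <= INR n < 2 * 2 ^ p.
Proof.
  split; rewrite <- INR_pow2; [apply le_INR; auto|].
  replace 2 with (INR 2) by reflexivity. rewrite <- mult_INR. apply lt_INR.
  rewrite <- Nat.pow_succ_r'. auto.
Qed.

Lemma ln_n_bounds : INR p * ln 2 <= L < (INR p + 1) * ln 2.
Proof.
  pose proof INR_n_bounds. pose proof (pow2_pos_R p). unfold L. split.
  - rewrite <- ln_pow2. apply ln_le; lra.
  - rewrite <- S_INR, <- ln_pow2. apply ln_increasing; simpl; lra.
Qed.

Lemma ln_n_ge_half_p : INR p / 2 <= L.
Proof. pose proof ln_n_bounds. pose proof ln2_bounds. pose proof p_ge1. nra. Qed.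

Lemma n_ln_n_pos : 0 < INR n * L.
Proof.
  pose proof INR_n_bounds. pose proof (pow2_pos_R p). pose proof ln_n_ge_half_p. pose proof p_ge1.
  apply Rmult_lt_0_compat; lra.
Qed.

Lemma ln_INR_m : ln (INR m) = (INR p + 2 + INR r) * ln 2.
Proof. unfold m. rewrite INR_pow2, ln_pow2, !plus_INR. reflexivity. Qed.

Lemma ln_pow2W : ln (2 ^ W) = (2 * INR p + 2) * ln 2.
Proof. unfold W. rewrite ln_pow2, plus_INR, mult_INR. reflexivity. Qed.

Lemma avg_prof_hi_le_ln_n : avg W (prof_hi W m) <= L.
Proof.
  pose proof (avg_prof_hi_le W m ltac:(pose proof m_ge2; lia) m_le_pow2W) as H.
  rewrite ln_pow2W, ln_INR_m in H. pose proof ln_n_bounds. pose proof ln2_bounds.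
  assert (4 <= INR r) by (replace 4 with (INR 4) by (simpl; lra); apply le_INR; auto).
  nra.
Qed.

Lemma avg_prof_lo_ge_ln_n : (1 - eps / 2) * L <= avg W (prof_lo W m).
Proof.
  pose proof (avg_prof_lo_ge W m ltac:(pose proof m_ge2; lia) m_le_pow2W) as H.
  rewrite ln_pow2W, ln_INR_m in H. pose proof ln_n_bounds. pose proof ln2_bounds.
  assert (Hr : INR r + 3 <= eps / 2 * (INR p + 1)).
  { pose proof (le_mul_of_div_le _ _ _ eps_pos p_large_r). lra. }
  destruct (Rle_dec (1 - eps / 2) 0).
  - pose proof (avg_nonneg W (prof_lo W m) (fun w => proj1 (prof_lo_bounds W m w ltac:(pose proof m_ge2; lia)))).
    pose proof ln_n_ge_half_p. pose proof p_ge1. nra.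
  - apply Rle_trans with ((1 - eps / 2) * ((INR p + 1) * ln 2)); [apply Rmult_le_compat_l; lra|].
    nra.
Qed.

Lemma pow2W_eq : 2 ^ W = 4 * (2 ^ p * 2 ^ p).
Proof.
  unfold W. replace (2 * p + 2)%nat with (p + p + 2)%nat by lia. rewrite !pow_add. simpl. ring.
Qed.

Lemma zero_term_le : INR n / 2 ^ W <= delta / 10.
Proof.
  pose proof INR_n_bounds. pose proof (pow2_pos_R p). rewrite pow2W_eq.
  apply Rdiv_le_of_le_mul; [nra|].
  assert (10 <= 2 ^ p * delta).
  { pose proof (INR_le_pow2 p). apply le_mul_of_div_le; lra. }
  nra.
Qed.

Lemma small_term_le : INR n * INR A / 2 ^ W <= delta / 10.
Proof.
  pose proof INR_n_bounds. pose proof (pow2_pos_R p). pose proof (pow2_pos_R q).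
  assert (HA : INR A * 2 ^ q = 4 * 2 ^ p).
  { unfold A. rewrite INR_pow2, <- pow_add. replace (p + 2 - q + q)%nat with (p + 2)%nat by lia.
    rewrite pow_add. simpl. ring. }
  assert (20 <= 2 ^ q * delta) by (apply le_mul_of_div_le; lra).
  rewrite pow2W_eq. apply Rdiv_le_of_le_mul; [nra|].
  apply Rmult_le_reg_r with (2 ^ q); auto. pose proof (pos_INR A). nra.
Qed.

Lemma mid_term_le :
  2 / (eps * (INR n * L)) * (INR n * (1 + ln (INR m) - ln (INR A))) <= delta / 10.
Proof.
  pose proof INR_n_bounds. pose proof (pow2_pos_R p). pose proof ln_n_ge_half_p. pose proof p_ge1.
  pose proof ln2_bounds. pose proof (pos_INR r). pose proof (pos_INR q).
  assert (HlnA : ln (INR A) = (INR p + 2 - INR q) * ln 2)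
    by (unfold A; rewrite INR_pow2, ln_pow2, minus_INR, !plus_INR by lia; reflexivity).
  rewrite ln_INR_m, HlnA.
  replace (2 / (eps * (INR n * L)) * (INR n * (1 + (INR p + 2 + INR r) * ln 2
    - (INR p + 2 - INR q) * ln 2))) with (2 * (1 + (INR r + INR q) * ln 2) / (eps * L))
    by (field; split; lra).
  apply Rdiv_le_of_le_mul; [apply Rmult_lt_0_compat; lra|].
  assert (40 * (1 + (INR r + INR q)) <= INR p * (eps * delta))
    by (apply le_mul_of_div_le; [apply Rmult_lt_0_compat|]; lra).
  assert (INR p * eps * delta <= 2 * L * eps * delta)
    by (apply Rmult_le_compat_r; [lra|]; apply Rmult_le_compat_r; lra).
  nra.
Qed.

Lemma var_term_le :
  2 * (INR n * (2 * INR W) * (2 ^ W / INR m) * avg W (prof_hi W m))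
    / (eps * (INR n * L) / 2) ^ 2 <= delta / 10.
Proof.
  pose proof INR_n_bounds. pose proof (pow2_pos_R p). pose proof (pow2_pos_R r).
  pose proof ln_n_ge_half_p. pose proof p_ge1. pose proof avg_prof_hi_le_ln_n.
  pose proof (avg_nonneg W (prof_hi W m) (fun w => proj1 (prof_hi_bounds W m w ltac:(pose proof m_ge2; lia)))).
  assert (Ec : 2 ^ W / INR m = 2 ^ p / 2 ^ r).
  { unfold m. rewrite INR_pow2, pow2W_eq. replace (p + 2 + r)%nat with (p + (2 + r))%nat by lia.
    rewrite !pow_add. simpl. field. lra. }
  assert (EW : INR W = 2 * INR p + 2) by (unfold W; rewrite plus_INR, mult_INR; reflexivity).
  rewrite Ec, EW. set (mu := avg W (prof_hi W m)) in *.
  assert (1280 <= 2 ^ r * (eps ^ 2 * delta))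
    by (apply le_mul_of_div_le; [apply Rmult_lt_0_compat; [apply pow_lt|]|]; lra).
  assert (Hgrowth : (2 * INR p + 2) * 2 ^ p * mu <= 8 * INR n * L * L).
  { apply Rle_trans with ((4 * INR p) * INR n * L).
    - apply Rmult_le_compat; [nra | lra | apply Rmult_le_compat; lra | lra].
    - replace (8 * INR n * L * L) with ((4 * INR n * L) * (2 * L)) by ring.
      replace (4 * INR p * INR n * L) with ((4 * INR n * L) * INR p) by ring.
      apply Rmult_le_compat_l; [apply Rmult_le_pos|]; lra. }
  apply Rdiv_le_of_le_mul; [apply pow_lt; apply Rdiv_lt_0_compat; [|lra]; apply Rmult_lt_0_compat;
    [lra | apply Rmult_lt_0_compat; lra]|].
  replace (2 * (INR n * (2 * (2 * INR p + 2)) * (2 ^ p / 2 ^ r) * mu))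
    with (4 * INR n * ((2 * INR p + 2) * 2 ^ p * mu) / 2 ^ r) by (field; lra).
  apply Rdiv_le_of_le_mul; [lra|].
  replace (delta / 10 * (eps * (INR n * L) / 2) ^ 2 * 2 ^ r)
    with (INR n * INR n * L * L * (2 ^ r * (eps ^ 2 * delta)) / 40) by (field; lra).
  assert (0 <= INR n * INR n * L * L) by (apply Rmult_le_pos; [nra|lra]).
  nra.
Qed.

Lemma avg_bad_majorant_small : avg (n - 1 + W) (bad_majorant n W m A eps) <= delta / 2.
Proof.
  eapply Rle_trans.
  - apply avg_bad_majorant_le; [auto | apply A_pos | apply A_le_m | apply m_ge2 | apply m_le_pow2W
                               | apply n_ln_n_pos].
  - fold L. pose proof zero_term_le. pose proof small_term_le. pose proof mid_term_le.
    pose proof var_term_le. lra.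
Qed.

Lemma deviation_event_bad_majorant x :
  deviation_event eps n x -> 1 <= bad_majorant n W m A eps (digits (n - 1 + W) x).
Proof.
  pose proof INR_n_bounds. pose proof (pow2_pos_R p).
  apply deviation_event_majorant; [auto | apply A_pos | apply A_le_m | apply m_ge2 | apply m_le_pow2W
    | apply n_ln_n_pos | | ]; fold L.
  - apply Rmult_le_compat_l; [lra | apply avg_prof_hi_le_ln_n].
  - rewrite <- Rmult_assoc, (Rmult_comm _ (INR n)), Rmult_assoc.
    apply Rmult_le_compat_l; [lra | apply avg_prof_lo_ge_ln_n].
Qed.

Lemma deviation_event_outer_measure_le : outer_measure_le (deviation_event eps n) delta.
Proof.
  apply (outer_measure_le_digit_markov (n - 1 + W) (bad_majorant n W m A eps)); auto.
  - intros s. apply bad_majorant_nonneg; [auto | apply n_ln_n_pos].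
  - apply avg_bad_majorant_small.
  - intros x Hx. split; [apply Hx | apply deviation_event_bad_majorant; auto].
Qed.

End ParameterChoice.

Lemma eventually_INR_ge X : exists k, forall p, (k <= p)%nat -> X <= INR p.
Proof.
  destruct (INR_unbounded X) as [k Hk]. exists k. intros p Hp.
  pose proof (le_INR k p Hp). lra.
Qed.

Lemma eventually_pow2_ge X : exists k, forall p, (k <= p)%nat -> X <= 2 ^ p.
Proof.
  destruct (eventually_INR_ge X) as [k Hk]. exists k. intros p Hp.
  pose proof (Hk p Hp). pose proof (INR_le_pow2 p). lra.
Qed.

Lemma le_log2_of_pow2_le k n : (2 ^ k <= n)%nat -> (k <= Nat.log2 n)%nat.
Proof. intros H. rewrite <- (Nat.log2_pow2 k) by lia. apply Nat.log2_le_mono; auto. Qed.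

Theorem theorem1p3 :
  forall eps delta : R, 0 < eps -> 0 < delta ->
  exists N : nat, forall n : nat, (N <= n)%nat ->
    outer_measure_le (deviation_event eps n) delta.
Proof.
  intros eps delta He Hd.
  destruct (eventually_pow2_ge (1280 / (eps ^ 2 * delta))) as [r0 Hr].
  destruct (eventually_pow2_ge (20 / delta)) as [q Hq].
  set (r := (r0 + 4)%nat).
  destruct (eventually_INR_ge (10 / delta)) as [k1 Hk1].
  destruct (eventually_INR_ge (40 * (1 + (INR r + INR q)) / (eps * delta))) as [k2 Hk2].
  destruct (eventually_INR_ge (2 * (INR r + 3) / eps)) as [k3 Hk3].
  set (K := (k1 + k2 + k3 + r + q)%nat).
  exists (2 ^ K)%nat. intros n Hn.
  assert (Hn0 : (0 < n)%nat) by (pose proof (pow2_pos K); lia).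
  destruct (Nat.log2_spec n Hn0) as [Hlo Hhi].
  pose proof (le_log2_of_pow2_le K n Hn) as Hp.
  apply (deviation_event_outer_measure_le eps delta (Nat.log2 n) r q n); auto;
    try (apply Hr || apply Hq || apply Hk1 || apply Hk2 || apply Hk3); unfold K, r in *; lia.
Qed.
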